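(* Let $G:\mathcal{A}\to\mathcal{B}$ be a discrete opfibration. If $\mathcal{B}$ is quasi-Gröbner, then $\mathcal{A}$ is quasi-Gröbner.
   Context: A functor $G:\mathcal{A}\to\mathcal{B}$ is a discrete opfibration if for every object $a$ of $\mathcal{A}$ and every morphism $g:G(a)\to b$ in $\mathcal{B}$ there is a unique morphism $f$ out of $a$ with $G(f)=g$. Quasi-Gröbner: for a small category $\mathcal{C}$ and object $c$, an admissible order on morphisms out of $c$ is a choice of well-orders on each $\mathrm{Hom}(c,c')$ such that $f\prec f'$ implies $g\circ f\prec g\circ f'$ for all $g$; the preorder $f\le g$ iff $g=h\circ f$ for some $h$ gives a poset $|c/\mathcal{C}|$; a poset is Noetherian if every sequence $x_1,x_2,\dots$ has $i<j$ with $x_i\le x_j$. $\mathcal{C}$ is Gröbner if for every object $c$: (G1) morphisms out of $c$ admit an admissible order and (G2) $|c/\mathcal{C}|$ is Noetherian. A functor $\Phi:\mathcal{C}\to\mathcal{D}$ has property (F) if for every object $d$ of $\mathcal{D}$ there are finitely many objects $c_i$ and morphisms $f_i:d\to\Phi(c_i)$ such that every $f:d\to\Phi(c)$ factors as $\Phi(g)\circ f_i$ for some $i$ and $g:c_i\to c$. $\mathcal{D}$ is quasi-Gröbner if there are a Gröbner $\mathcal{C}$ and an essentially surjective functor $\mathcal{C}\to\mathcal{D}$ with property (F). *)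

From Stdlib Require Import List Arith.
Import ListNotations.
Set Implicit Arguments.

Record Category := {
  Obj : Type;
  Hom : Obj -> Obj -> Type;
  id : forall a, Hom a a;
  comp : forall a b c, Hom b c -> Hom a b -> Hom a c;
  comp_id_l : forall a b (f : Hom a b), comp (id b) f = f;
  comp_id_r : forall a b (f : Hom a b), comp f (id a) = f;
  comp_assoc : forall a b c d (f : Hom a b) (g : Hom b c) (h : Hom c d),
      comp h (comp g f) = comp (comp h g) f
}.

Arguments id {_} a.
Arguments comp {_ a b c} g f.

Record Functor (C D : Category) := {
  fobj : Obj C -> Obj D;
  fmap : forall a b, Hom C a b -> Hom D (fobj a) (fobj b);
  fmap_id : forall a, fmap a a (@id C a) = @id D (fobj a);
  fmap_comp : forall a b c (f : Hom C a b) (g : Hom C b c),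
      fmap a c (@comp C a b c g f) = @comp D _ _ _ (fmap b c g) (fmap a b f)
}.

Arguments fobj {_ _} _ _.
Arguments fmap {_ _} _ {_ _} _.

(* The equation
   G f = g is stated as equality of morphisms out of G a, i.e. of
   dependent pairs (codomain, morphism). *)
Definition discrete_opfibration (A B : Category) (G : Functor A B) : Prop :=
  forall (a : Obj A) (b : Obj B) (g : Hom B (fobj G a) b),
    (exists (a' : Obj A) (f : Hom A a a'),
        existT (fun y => Hom B (fobj G a) y) (fobj G a') (fmap G f)
        = existT (fun y => Hom B (fobj G a) y) b g)
    /\
    (forall (a1 a2 : Obj A) (f1 : Hom A a a1) (f2 : Hom A a a2),
        existT (fun y => Hom B (fobj G a) y) (fobj G a1) (fmap G f1)
          = existT (fun y => Hom B (fobj G a) y) b g ->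
        existT (fun y => Hom B (fobj G a) y) (fobj G a2) (fmap G f2)
          = existT (fun y => Hom B (fobj G a) y) b g ->
        existT (fun y => Hom A a y) a1 f1 = existT (fun y => Hom A a y) a2 f2).

Definition well_order (X : Type) (lt : X -> X -> Prop) : Prop :=
  (forall x, ~ lt x x) /\
  (forall x y z, lt x y -> lt y z -> lt x z) /\
  (forall x y, lt x y \/ x = y \/ lt y x) /\
  well_founded lt.

Definition admissible_order (C : Category) (c : Obj C)
    (lt : forall c' : Obj C, Hom C c c' -> Hom C c c' -> Prop) : Prop :=
  (forall c', well_order (lt c')) /\
  (forall c' c'' (f f' : Hom C c c') (g : Hom C c' c''),
      lt c' f f' -> lt c'' (comp g f) (comp g f')).

Definition Out (C : Category) (c : Obj C) : Type := { c' : Obj C & Hom C c c' }.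

(* The preorder f <= g iff g = h o f for some h; |c/C| is its poset quotient. *)
Definition out_le (C : Category) (c : Obj C) (p q : Out C c) : Prop :=
  exists h : Hom C (projT1 p) (projT1 q), projT2 q = comp h (projT2 p).

(* Noetherianity of |c/C|: every sequence x_1, x_2, ... has i < j with
   x_i <= x_j (checked on representatives). *)
Definition noetherian_under (C : Category) (c : Obj C) : Prop :=
  forall x : nat -> Out C c, exists i j, i < j /\ @out_le C c (x i) (x j).

Definition Groebner (C : Category) : Prop :=
  forall c : Obj C,
    (exists lt, @admissible_order C c lt) /\ @noetherian_under C c.

Definition is_iso (C : Category) (a b : Obj C) (f : Hom C a b) : Prop :=
  exists g : Hom C b a, comp g f = id a /\ comp f g = id b.

Definition ess_surj (C D : Category) (F : Functor C D) : Prop :=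
  forall d : Obj D, exists (c : Obj C) (f : Hom D d (fobj F c)), @is_iso D d (fobj F c) f.

Definition property_F (C D : Category) (F : Functor C D) : Prop :=
  forall d : Obj D,
    exists l : list { ci : Obj C & Hom D d (fobj F ci) },
      forall (c : Obj C) (f : Hom D d (fobj F c)),
        exists p, In p l /\
          exists g : Hom C (projT1 p) c, f = comp (fmap F g) (projT2 p).

Definition quasi_Groebner (D : Category) : Prop :=
  exists (C : Category) (F : Functor C D),
    Groebner C /\ @ess_surj C D F /\ @property_F C D F.

(* Let (F : C -> B) witness that B is quasi-Groebner.  The iso-comma category C'
   of G and F has objects (c, a, phi : G a ~ F c); its projection to A is
   essentially surjective because F is, and it has property (F) because lifting
   along G turns the finitely many morphisms G a -> F c_i given for F into
   finitely many morphisms a -> a_i in A.  Unique lifting also makes the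
   projection C' -> C faithful and lets it reflect factorizations of morphisms
   out of a fixed object, so admissible orders and Noetherianity of C pull back
   to C'. *)
From Stdlib Require Import List Wellfounded Eqdep ProofIrrelevance.

Local Infix "∘" := comp (at level 40, left associativity).

#[local] Arguments comp_id_l {_ _ _} f.
#[local] Arguments comp_id_r {_ _ _} f.
#[local] Arguments comp_assoc {_ _ _ _ _} f g h.
#[local] Arguments fmap_id {_ _} _ a.
#[local] Arguments fmap_comp {_ _} _ {a b c} f g.

Lemma finite_choice {T U : Type} (R : T -> U -> Prop) (l : list T) :
  (forall p, In p l -> exists q, R p q) ->
  exists l', forall p, In p l -> exists q, In q l' /\ R p q.
Proof.
  induction l as [|t l IH]; intros Hl.
  - exists nil. intros p [].
  - destruct (Hl t (or_introl eq_refl)) as [q Hq].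
    destruct IH as [l' Hl']; [intros p Hp; apply Hl; right; exact Hp|].
    exists (q :: l'). intros p [<-|Hp].
    + exists q. split; [left; reflexivity|exact Hq].
    + destruct (Hl' p Hp) as [q' [Hq' Rq']].
      exists q'. split; [right; exact Hq'|exact Rq'].
Qed.

Lemma well_order_inverse_image (X Y : Type) (h : X -> Y) (lt : Y -> Y -> Prop) :
  (forall x y, h x = h y -> x = y) ->
  well_order lt -> well_order (fun x y => lt (h x) (h y)).
Proof.
  intros h_inj [Hirr [Htr [Htot Hwf]]].
  split; [|split; [|split]].
  - intros x. apply Hirr.
  - intros x y z. apply Htr.
  - intros x y. destruct (Htot (h x) (h y)) as [Hxy|[Hxy|Hxy]]; auto.
  - apply wf_inverse_image, Hwf.
Qed.

Section CategoryFacts.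
Context {X : Category}.

Definition eq_hom {x y : Obj X} (e : x = y) : Hom X x y :=
  match e in _ = y return Hom X x y with eq_refl => id x end.

Lemma eq_hom_is_iso {x y : Obj X} (e : x = y) : is_iso X x y (eq_hom e).
Proof. destruct e. exists (id x). split; apply comp_id_l. Qed.

Lemma id_is_iso (x : Obj X) : is_iso X x x (id x).
Proof. exact (eq_hom_is_iso eq_refl). Qed.

Lemma Out_eq_iff (x : Obj X) (p q : Out X x) :
  p = q <-> exists e : projT1 p = projT1 q, eq_hom e ∘ projT2 p = projT2 q.
Proof.
  split.
  - intros <-. exists eq_refl. apply comp_id_l.
  - destruct p as [y u], q as [z v]; simpl. intros [e He].
    destruct e. simpl in He. rewrite comp_id_l in He. subst v. reflexivity.
Qed.

Lemma is_iso_cancel_l {x y z : Obj X} {f : Hom X y z} {u v : Hom X x y} :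
  is_iso X y z f -> f ∘ u = f ∘ v -> u = v.
Proof.
  intros [g [Hgf _]] Huv.
  rewrite <- (comp_id_l u), <- (comp_id_l v), <- Hgf, <- !comp_assoc, Huv.
  reflexivity.
Qed.

End CategoryFacts.

Section DiscreteOpfibration.
Context {A B : Category} {G : Functor A B}.
Hypothesis HG : discrete_opfibration G.

Lemma dopfib_lift {a : Obj A} {b : Obj B} (g : Hom B (fobj G a) b) :
  exists a' (f : Hom A a a') (e : fobj G a' = b), eq_hom e ∘ fmap G f = g.
Proof.
  destruct (HG _ _ g) as [[a' [f Hf]] _].
  apply Out_eq_iff in Hf as [e He]. eauto.
Qed.

Lemma dopfib_faithful {a a' : Obj A} (f1 f2 : Hom A a a') :
  fmap G f1 = fmap G f2 -> f1 = f2.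
Proof.
  intros E. destruct (HG _ _ (fmap G f2)) as [_ Hunique].
  apply inj_pair2, Hunique; [rewrite E|]; reflexivity.
Qed.

Lemma dopfib_factor {a a1 a2 : Obj A} (f1 : Hom A a a1) (f2 : Hom A a a2)
    (b : Hom B (fobj G a1) (fobj G a2)) :
  b ∘ fmap G f1 = fmap G f2 -> exists k, fmap G k = b /\ k ∘ f1 = f2.
Proof.
  intros Hb. destruct (dopfib_lift b) as [a' [l [e Hl]]].
  destruct (HG _ _ (fmap G f2)) as [_ Hunique].
  assert (Hlf : existT (fun y => Hom A a y) a' (l ∘ f1) = existT _ a2 f2).
  { apply Hunique; [|reflexivity]. apply Out_eq_iff. exists e. simpl.
    rewrite fmap_comp, comp_assoc, Hl. exact Hb. }
  pose proof (f_equal (@projT1 _ _) Hlf) as Ea. simpl in Ea. subst a'.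
  apply inj_pair2 in Hlf.
  rewrite (UIP_refl _ _ e) in Hl. simpl in Hl. rewrite comp_id_l in Hl. eauto.
Qed.

End DiscreteOpfibration.

Section ReflectGroebner.
Context {C' C : Category} (H : Functor C' C).

Definition faithful : Prop :=
  forall x y (p q : Hom C' x y), fmap H p = fmap H q -> p = q.

Definition reflects_factorizations : Prop :=
  forall x y z (p : Hom C' x y) (q : Hom C' x z) (h : Hom C (fobj H y) (fobj H z)),
    fmap H q = h ∘ fmap H p -> exists k, q = k ∘ p.

Lemma admissible_order_faithful {x : Obj C'} :
  faithful -> (exists lt, admissible_order C (fobj H x) lt) ->
  exists lt, admissible_order C' x lt.
Proof.
  intros H_faithful [lt [Hwo Hcomp]].
  exists (fun y (p q : Hom C' x y) => lt (fobj H y) (fmap H p) (fmap H q)). split.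
  - intros y. apply well_order_inverse_image; [apply H_faithful|apply Hwo].
  - intros y z p q r Hpq. rewrite !fmap_comp. apply Hcomp, Hpq.
Qed.

Lemma noetherian_under_reflect {x : Obj C'} :
  reflects_factorizations -> noetherian_under C (fobj H x) -> noetherian_under C' x.
Proof.
  intros H_reflects HC s.
  destruct (HC (fun n => existT _ (fobj H (projT1 (s n))) (fmap H (projT2 (s n)))))
    as [i [j [Hij [h Hh]]]].
  exists i, j. split; [exact Hij|].
  exact (H_reflects _ _ _ _ _ h Hh).
Qed.

Lemma Groebner_reflect :
  faithful -> reflects_factorizations -> Groebner C -> Groebner C'.
Proof.
  intros H_faithful H_reflects HC x. destruct (HC (fobj H x)) as [Hadm Hnoeth].
  split.
  - exact (admissible_order_faithful H_faithful Hadm).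
  - exact (noetherian_under_reflect H_reflects Hnoeth).
Qed.

End ReflectGroebner.

Section IsoComma.
Context {A B C : Category} (G : Functor A B) (F : Functor C B).

Record iso_comma_obj : Type := {
  ic_c : Obj C;
  ic_a : Obj A;
  ic_iso : Hom B (fobj G ic_a) (fobj F ic_c);
  ic_iso_is_iso : is_iso B _ _ ic_iso
}.

Record iso_comma_hom (x y : iso_comma_obj) : Type := {
  ic_hom_c : Hom C (ic_c x) (ic_c y);
  ic_hom_a : Hom A (ic_a x) (ic_a y);
  ic_hom_comm : ic_iso y ∘ fmap G ic_hom_a = fmap F ic_hom_c ∘ ic_iso x
}.

Arguments ic_hom_c {x y} _.
Arguments ic_hom_a {x y} _.
Arguments ic_hom_comm {x y} _.

Lemma iso_comma_hom_ext {x y : iso_comma_obj} (p q : iso_comma_hom x y) :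
  ic_hom_c p = ic_hom_c q -> ic_hom_a p = ic_hom_a q -> p = q.
Proof.
  destruct p as [pc pa Hp], q as [qc qa Hq]; simpl. intros -> ->.
  f_equal. apply proof_irrelevance.
Qed.

Lemma ic_id_comm (x : iso_comma_obj) :
  ic_iso x ∘ fmap G (id (ic_a x)) = fmap F (id (ic_c x)) ∘ ic_iso x.
Proof. rewrite !fmap_id, comp_id_l, comp_id_r. reflexivity. Qed.

Definition ic_id (x : iso_comma_obj) : iso_comma_hom x x :=
  {| ic_hom_comm := ic_id_comm x |}.

Lemma ic_comp_comm {x y z : iso_comma_obj} (q : iso_comma_hom y z) (p : iso_comma_hom x y) :
  ic_iso z ∘ fmap G (ic_hom_a q ∘ ic_hom_a p) = fmap F (ic_hom_c q ∘ ic_hom_c p) ∘ ic_iso x.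
Proof.
  rewrite !fmap_comp, comp_assoc, (ic_hom_comm q), <- comp_assoc, (ic_hom_comm p).
  apply comp_assoc.
Qed.

Definition ic_comp {x y z : iso_comma_obj} (q : iso_comma_hom y z) (p : iso_comma_hom x y) :
  iso_comma_hom x z :=
  {| ic_hom_comm := ic_comp_comm q p |}.

Definition iso_comma : Category.
Proof.
  refine {| Obj := iso_comma_obj; Hom := iso_comma_hom; id := ic_id; comp := @ic_comp |}.
  - intros x y p. apply iso_comma_hom_ext; apply comp_id_l.
  - intros x y p. apply iso_comma_hom_ext; apply comp_id_r.
  - intros x y z w p q r. apply iso_comma_hom_ext; apply comp_assoc.
Defined.

Definition iso_comma_proj_A : Functor iso_comma A :=
  @Build_Functor iso_comma A ic_a (fun x y p => ic_hom_a p)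
    (fun x => eq_refl) (fun x y z p q => eq_refl).

Definition iso_comma_proj_C : Functor iso_comma C :=
  @Build_Functor iso_comma C ic_c (fun x y p => ic_hom_c p)
    (fun x => eq_refl) (fun x y z p q => eq_refl).

Lemma iso_comma_proj_A_ess_surj : ess_surj F -> ess_surj iso_comma_proj_A.
Proof.
  intros HF a. destruct (HF (fobj G a)) as [c [phi Hphi]].
  exists {| ic_c := c; ic_a := a; ic_iso := phi; ic_iso_is_iso := Hphi |}, (id a).
  apply id_is_iso.
Qed.

Hypothesis HG : discrete_opfibration G.

Lemma iso_comma_lift_factor {a : Obj A} {x y : iso_comma_obj}
    (f1 : Hom A a (ic_a x)) (f2 : Hom A a (ic_a y)) (h : Hom C (ic_c x) (ic_c y)) :
  fmap F h ∘ (ic_iso x ∘ fmap G f1) = ic_iso y ∘ fmap G f2 ->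
  exists k : iso_comma_hom x y, ic_hom_c k = h /\ ic_hom_a k ∘ f1 = f2.
Proof.
  intros Hh. destruct (ic_iso_is_iso y) as [psi [Hpsi_l Hpsi_r]].
  destruct (dopfib_factor HG f1 f2 (psi ∘ (fmap F h ∘ ic_iso x))) as [k [Hk Hkf]].
  { rewrite <- !comp_assoc, Hh, comp_assoc, Hpsi_l. apply comp_id_l. }
  assert (Hcomm : ic_iso y ∘ fmap G k = fmap F h ∘ ic_iso x).
  { rewrite Hk, comp_assoc, Hpsi_r. apply comp_id_l. }
  exists {| ic_hom_comm := Hcomm |}. split; [reflexivity|exact Hkf].
Qed.

Lemma iso_comma_proj_C_faithful : faithful iso_comma_proj_C.
Proof.
  intros x y p q Hpq; simpl in Hpq. apply iso_comma_hom_ext; [exact Hpq|].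
  apply (dopfib_faithful HG), (is_iso_cancel_l (ic_iso_is_iso y)).
  rewrite !ic_hom_comm, Hpq. reflexivity.
Qed.

Lemma iso_comma_proj_C_reflects_factorizations :
  reflects_factorizations iso_comma_proj_C.
Proof.
  intros x y z p q h Hq; simpl in Hq.
  destruct (iso_comma_lift_factor (ic_hom_a p) (ic_hom_a q) h) as [k [Hkc Hka]].
  { rewrite (ic_hom_comm p), (ic_hom_comm q), comp_assoc, <- fmap_comp, Hq.
    reflexivity. }
  exists k. apply iso_comma_hom_ext; simpl; rewrite ?Hkc; congruence.
Qed.

Lemma iso_comma_proj_A_property_F : property_F F -> property_F iso_comma_proj_A.
Proof.
  intros HPF a. destruct (HPF (fobj G a)) as [l Hl].
  destruct (finite_choice
    (fun (p : {c : Obj C & Hom B (fobj G a) (fobj F c)})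
         (q : {x : iso_comma_obj & Hom A a (ic_a x)}) =>
       exists (a' : Obj A) (f : Hom A a a') (e : fobj G a' = fobj F (projT1 p)),
         eq_hom e ∘ fmap G f = projT2 p /\
         q = existT _ {| ic_iso_is_iso := eq_hom_is_iso e |} f) l)
    as [l' Hl'].
  { intros [c g] _. destruct (dopfib_lift HG g) as [a' [f [e He]]].
    eexists. exists a', f, e. split; [exact He|reflexivity]. }
  exists l'. intros y f.
  destruct (Hl (ic_c y) (ic_iso y ∘ fmap G f)) as [p [Hp [g Hg]]].
  destruct (Hl' p Hp) as [q [Hq [a' [f' [e [He ->]]]]]].
  eexists. split; [exact Hq|]. simpl.
  destruct (iso_comma_lift_factor (x := {| ic_iso_is_iso := eq_hom_is_iso e |}) f' f g)
    as [k [_ Hk]].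
  { simpl. rewrite He. symmetry. exact Hg. }
  exists k. symmetry. exact Hk.
Qed.

End IsoComma.

Theorem lemma1p18 (A B : Category) (G : Functor A B) :
  discrete_opfibration G -> quasi_Groebner B -> quasi_Groebner A.
Proof.
  intros HG [C [F [HC [HF HPF]]]].
  exists (iso_comma G F), (iso_comma_proj_A G F).
  split; [|split].
  - exact (Groebner_reflect _ (iso_comma_proj_C_faithful G F HG)
              (iso_comma_proj_C_reflects_factorizations G F HG) HC).
  - exact (iso_comma_proj_A_ess_surj G F HF).
  - exact (iso_comma_proj_A_property_F G F HG HPF).
Qed.
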